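(* Let $\{P_\theta:\theta\in\Theta\}$ be a family of distributions on a measurable space $\mathbb{X}$, let $\mathcal{L}$ be a measurable nonnegative loss, and for an estimator $\varphi$ (a measurable function of finite sequences of elements of $\mathbb{X}$) define ${\sf risk}_n(\varphi,\theta)=\mathbb{E}_\theta[\mathcal{L}(\varphi(X_1,\dots,X_n),\theta)]$ with $X_1,\dots,X_n$ i.i.d. from $P_\theta$, ${\sf risk}_n(\varphi)=\sup_{\theta\in\Theta}{\sf risk}_n(\varphi,\theta)$, and the minimax risk $R(n)=\inf_\varphi {\sf risk}_n(\varphi)$, assumed finite for all $n$ large enough. Suppose $\limsup_{a\to\infty}\limsup_{n\to\infty} R(an)/R(n)=0$. Then for any estimator $\varphi$ that can be computed in $o(n)$ time when applied to a sample of size $n$, ${\sf risk}_n(\varphi)/R(n)\to\infty$ as $n\to\infty$.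
   Context: Computational model: it takes one unit of time to register (read) an observation for further processing, so an algorithm running in time $b(n)$ on a sample of size $n$ can read at most $b(n)$ observations, where the index of each observation read may depend on the values of previously read observations. *)

From HB Require Import structures.
From mathcomp Require Import all_boot all_order all_algebra.
From mathcomp Require Import all_classical all_reals all_analysis measurable_realfun.
Set Implicit Arguments. Unset Strict Implicit. Unset Printing Implicit Defensive.
Import Order.TTheory GRing.Theory Num.Theory.
Import numFieldNormedType.Exports.
Local Open Scope classical_set_scope.
Local Open Scope ring_scope.

Section Minimax.
Context {R : realType} {dX : measure_display} (X : measurableType dX).

Fixpoint smpl (n : nat) : {d : measure_display & measurableType d} :=
  match n with
  | 0 => existT measurableType _ (unit : measurableType _)
  | n'.+1 => existT measurableType _ ((X * projT2 (smpl n'))%type : measurableType _)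
  end.
Definition smplT (n : nat) : measurableType (projT1 (smpl n)) := projT2 (smpl n).

Fixpoint iid (Q : probability X R) (n : nat) : probability (smplT n) R :=
  match n return probability (smplT n) R with
  | 0 => (@dirac _ unit tt R : probability unit R)
  | n'.+1 => ((Q \x iid Q n')%E : probability (X * smplT n')%type R)
  end.

Fixpoint totuple (n : nat) : smplT n -> n.-tuple X :=
  match n return smplT n -> n.-tuple X with
  | 0 => fun _ => [tuple]
  | n'.+1 => fun s => [tuple of s.1 :: @totuple n' s.2]
  end.
Definition obs (n : nat) (s : smplT n) (i : 'I_n) : X := tnth (totuple s) i.

(* Adaptive reading: the index of the (k+1)-th observation read is
   idx k applied to the k values read so far (most recent first). *)
Fixpoint reads (n : nat) (idx : forall k, smplT k -> 'I_n) (x : smplT n)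
    (k : nat) : smplT k :=
  match k return smplT k with
  | 0 => tt
  | k'.+1 => (obs x (idx k' (reads idx x k')), reads idx x k')
  end.

Definition computed_reading {dY} {Y : measurableType dY} (n m : nat)
    (f : smplT n -> Y) : Prop :=
  exists (idx : forall k, smplT k -> 'I_n) (out : smplT m -> Y),
    [/\ (forall k, (k < m)%N -> forall j : 'I_n, measurable (idx k @^-1` [set j])),
        measurable_fun setT out &
        forall x, f x = out (reads idx x m)].

Context {Theta : Type} (P : Theta -> probability X R).
Context {dY : measure_display} {Y : measurableType dY} (L : Y -> Theta -> \bar R).

Definition risk (n : nat) (f : smplT n -> Y) (theta : Theta) : \bar R :=
  (\int[iid (P theta) n]_x L (f x) theta)%E.

Definition riskn (n : nat) (f : smplT n -> Y) : \bar R :=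
  ereal_sup [set risk f theta | theta in [set: Theta]].

Definition minimax (n : nat) : \bar R :=
  ereal_inf [set riskn f | f in [set f : smplT n -> Y | measurable_fun setT f]].

End Minimax.

From HB Require Import structures.
From mathcomp Require Import all_boot all_order all_algebra.
From mathcomp Require Import all_classical all_reals all_analysis measurable_realfun.
Import Order.TTheory GRing.Theory Num.Theory.
Import numFieldNormedType.Exports.
Local Open Scope classical_set_scope.
Local Open Scope ring_scope.
Set Implicit Arguments. Unset Strict Implicit.

(* An estimator reading m observations adaptively can be simulated on a fresh
   sample of size m by storing the observations in the order in which their
   indices are first read.  On the event that the indices read form the tuple L,
   the values read are the coordinates of the sample at the distinct entries of
   L, and under an i.i.d. law distinct coordinates are again i.i.d.; summing over
   L, the simulation has the same risk, so risk_n(phi) >= R(m) >= R(b n).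
   The hypothesis on the ratios gives an a with R(a k) <= eps R(k) for large k;
   since R is nonincreasing and a * b n <= n eventually, taking k = max(b n, N)
   yields R(n) <= R(a k) <= eps R(k) <= eps R(b n). *)

Section Samples.
Context {dX : measure_display} (X : measurableType dX).

Fixpoint mksmpl (r : nat) : ('I_r -> X) -> smplT X r :=
  match r return ('I_r -> X) -> smplT X r with
  | 0 => fun _ => tt
  | r'.+1 => fun f => (f ord0, @mksmpl r' (f \o lift ord0))
  end.

Lemma obs0 n a (w : smplT X n) : obs (n := n.+1) (a, w) ord0 = a.
Proof. by rewrite /obs (tnth_nth a). Qed.

Lemma obsS n a (w : smplT X n) i : obs (n := n.+1) (a, w) (lift ord0 i) = obs w i.
Proof. by rewrite /obs (tnth_nth a) /= (tnth_nth a). Qed.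

Lemma obs_mksmpl r (f : 'I_r -> X) : obs (mksmpl f) =1 f.
Proof.
elim: r f => [f []//|r IH f i].
by case: (unliftP ord0 i) => [j ->|->]; rewrite ?obsS ?IH ?obs0.
Qed.

Lemma eq_from_obs r (v w : smplT X r) : obs v =1 obs w -> v = w.
Proof.
elim: r v w => [[] []//|r IH] [a v] [b w] vw.
have := vw ord0; rewrite !obs0 => ->; congr pair; apply: IH => i.
by have := vw (lift ord0 i); rewrite !obsS.
Qed.

Lemma measurable_obs n (i : 'I_n) : measurable_fun setT (fun x : smplT X n => obs x i).
Proof.
elim: n i => [[]//|n IH] i.
case: (unliftP ord0 i) => [j ->|->].
- rewrite (_ : (fun x => _) = (fun x => obs x j) \o snd).
    exact: measurableT_comp (IH j) measurable_snd.
  by apply: funext => -[a w]; rewrite obsS.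
- rewrite (_ : (fun x => _) = fst); first exact: measurable_fst.
  by apply: funext => -[a w]; rewrite obs0.
Qed.

Lemma measurable_mksmpl d (T : measurableType d) r (F : T -> 'I_r -> X) :
  (forall i, measurable_fun setT (F ^~ i)) -> measurable_fun setT (fun t => mksmpl (F t)).
Proof.
elim: r F => [|r IH] F mF /=; first exact: measurable_cst.
by apply: measurable_fun_pair; [exact: mF | apply: IH => i; exact: mF].
Qed.

Definition subsample n r (d : 'I_r -> 'I_n) (x : smplT X n) : smplT X r :=
  mksmpl (fun i => obs x (d i)).

Lemma obs_subsample n r (d : 'I_r -> 'I_n) x i : obs (subsample d x) i = obs x (d i).
Proof. exact: obs_mksmpl. Qed.

Lemma measurable_subsample n r (d : 'I_r -> 'I_n) : measurable_fun setT (subsample d).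
Proof. by apply: measurable_mksmpl => i; exact: measurable_obs. Qed.

Lemma subsample_comp n r p (d : 'I_r -> 'I_n) (c : 'I_p -> 'I_r) x :
  subsample (d \o c) x = subsample c (subsample d x).
Proof. by apply: eq_from_obs => i; rewrite !obs_subsample. Qed.

Lemma subsample_cons_lift n r (d : 'I_r -> 'I_n.+1) (e : 'I_r -> 'I_n) a w :
  (forall i, d i = lift ord0 (e i)) -> subsample d (a, w) = subsample e w.
Proof. by move=> de; apply: eq_from_obs => i; rewrite !obs_subsample de obsS. Qed.

Definition insert_at r (j : 'I_r.+1) (a : X) (w : smplT X r) : smplT X r.+1 :=
  mksmpl (fun i => if unlift j i is Some k then obs w k else a).

Lemma obs_insert_at_pivot r (j : 'I_r.+1) a w : obs (insert_at j a w) j = a.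
Proof. by rewrite obs_mksmpl unlift_none. Qed.

Lemma obs_insert_at_lift r (j : 'I_r.+1) a w k : obs (insert_at j a w) (lift j k) = obs w k.
Proof. by rewrite obs_mksmpl liftK. Qed.

Lemma insert_at0 r a (w : smplT X r) : insert_at ord0 a w = (a, w).
Proof.
apply: eq_from_obs => i; case: (unliftP ord0 i) => [k ->|->].
- by rewrite obs_insert_at_lift obsS.
- by rewrite obs_insert_at_pivot obs0.
Qed.

Lemma insert_atS r (j : 'I_r.+1) a b (w : smplT X r) :
  insert_at (lift ord0 j) a (b, w) = (b, insert_at j a w).
Proof.
apply: eq_from_obs => i; case: (unliftP ord0 i) => [k ->|->].
- rewrite obsS; case: (unliftP j k) => [l ->|->].
  + have E : lift ord0 (lift j l) = lift (lift ord0 j) (lift ord0 l).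
      by apply: val_inj => /=; rewrite /bump !leq0n !addSn /= ltnS addnS.
    by rewrite obs_insert_at_lift E obs_insert_at_lift obsS.
  + by rewrite !obs_insert_at_pivot.
- have -> : ord0 = lift (lift ord0 j) ord0 :> 'I_r.+2 by apply: val_inj.
  by rewrite obs_insert_at_lift !obs0.
Qed.

Lemma measurable_insert_at d (T : measurableType d) r (j : 'I_r.+1)
    (f : T -> X) (g : T -> smplT X r) :
  measurable_fun setT f -> measurable_fun setT g ->
  measurable_fun setT (fun t => insert_at j (f t) (g t)).
Proof.
move=> mf mg; apply: measurable_mksmpl => i; case: (unlift j i) => [k|//].
exact: measurableT_comp (measurable_obs k) mg.
Qed.

Lemma subsample_cons_insert n r (j : 'I_r.+1) (d : 'I_r.+1 -> 'I_n.+1)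
    (e : 'I_r -> 'I_n) a w :
  d j = ord0 -> (forall i, d (lift j i) = lift ord0 (e i)) ->
  subsample d (a, w) = insert_at j a (subsample e w).
Proof.
move=> dj de; apply: eq_from_obs => i; rewrite obs_subsample.
case: (unliftP j i) => [k ->|->].
- by rewrite obs_insert_at_lift obs_subsample de obsS.
- by rewrite obs_insert_at_pivot dj obs0.
Qed.

End Samples.

Lemma integral_cst_probability {R : realType} d (T : measurableType d)
    (P : probability T R) (c : \bar R) :
  (\int[P]_x c = c)%E.
Proof. by rewrite integral_cst //= probability_setT mule1. Qed.

Section IidIntegrals.
Context {R : realType} {dX : measure_display} (X : measurableType dX).
Variable Q : probability X R.
Local Open Scope ereal_scope.

Lemma integral_iid0 (f : smplT X 0 -> \bar R) : \int[iid Q 0]_x f x = f tt.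
Proof.
rewrite (_ : f = cst (f tt)); last by apply: funext => -[].
exact: integral_cst_probability.
Qed.

Lemma integral_iidS n (f : smplT X n.+1 -> \bar R) :
  measurable_fun setT f -> (forall x, 0 <= f x) ->
  \int[iid Q n.+1]_x f x = \int[Q]_a \int[iid Q n]_w f (a, w).
Proof. exact: fubini_tonelli1. Qed.

Lemma integral_insert_at r (j : 'I_r.+1) (H : smplT X r.+1 -> \bar R) :
  measurable_fun setT H -> (forall x, 0 <= H x) ->
  \int[Q]_a \int[iid Q r]_w H (insert_at j a w) = \int[iid Q r.+1]_z H z.
Proof.
elim: r j H => [|r IH] j H mH H0; case: (unliftP ord0 j) => [{}j ->|->];
  try by under eq_integral do under eq_integral do rewrite insert_at0;
         rewrite integral_iidS.
  by case: j.
transitivity (\int[Q]_a \int[Q]_b \int[iid Q r]_w H (b, insert_at j a w)).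
  apply: eq_integral => a _; rewrite integral_iidS.
  - by apply: eq_integral => b _; apply: eq_integral => w _; rewrite insert_atS.
  - apply: measurableT_comp mH _.
    by apply: measurable_insert_at => //; exact: measurable_cst.
  - by move=> w; exact: H0.
rewrite (fubini_tonelli (fun p : X * X => \int[iid Q r]_w H (p.2, insert_at j p.1 w))).
- rewrite integral_iidS //; apply: eq_integral => b _.
  by rewrite -(IH j) //; exact: measurable_fun_pair2.
- apply: (measurable_fun_fubini_tonelli_F
    (fun q : (X * X) * smplT X r => H (q.1.2, insert_at j q.1.1 q.2))) => //.
  apply: measurableT_comp mH _; apply: measurable_fun_pair.
    exact: measurableT_comp measurable_snd measurable_fst.
  apply: (measurable_insert_at _ _ measurable_snd).
  exact: measurableT_comp measurable_fst measurable_fst.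
- by move=> p; apply: integral_ge0.
Qed.

End IidIntegrals.

Lemma lift_factor n (h : 'I_n.+1) (T : finType) (d : T -> 'I_n.+1) :
  (forall i, d i != h) -> exists e : T -> 'I_n, forall i, d i = lift h (e i).
Proof.
move=> dh; apply: (@fin_all_exists _ _ (fun i k => d i = lift h k)) => i.
by case: (unliftP h (d i)) => [k ->|/eqP]; [exists k | rewrite (negbTE (dh i))].
Qed.

Section SubsampleLaw.
Context {R : realType} {dX : measure_display} (X : measurableType dX).
Variable Q : probability X R.
Local Open Scope ereal_scope.

Lemma integral_subsample n r (d : 'I_r -> 'I_n) (H : smplT X r -> \bar R) :
  injective d -> measurable_fun setT H -> (forall z, 0 <= H z) ->
  \int[iid Q n]_x H (subsample d x) = \int[iid Q r]_z H z.
Proof.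
elim: n r d H => [|n IH] r d H injd mH H0.
  by case: r d H {injd mH H0} => [|r] d H; [rewrite !integral_iid0 | case: (d ord0)].
rewrite integral_iidS //; last exact: measurableT_comp mH (measurable_subsample d).
have [[j dj]|d_lift] := pselect (exists j, d j = ord0).
- case: r j d H injd mH H0 dj => [[]//|r] j d H injd mH H0 dj.
  have [e de] : exists e : 'I_r -> 'I_n, forall i, d (lift j i) = lift ord0 (e i).
    apply: lift_factor => i; rewrite -dj.
    by apply: contra_neq (neq_lift j i) => /injd ->.
  have inje : injective e.
    by move=> i1 i2 e12; apply: (lift_inj (h := j)); apply: injd; rewrite !de e12.
  rewrite -(integral_insert_at _ j) //; apply: eq_integral => a _.
  under eq_integral do rewrite (subsample_cons_insert _ _ dj de).
  apply: (IH _ e (fun v => H (insert_at j a v))) => //.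
  by apply: measurableT_comp mH _; apply: measurable_insert_at => //; exact: measurable_cst.
- have [e de] : exists e : 'I_r -> 'I_n, forall i, d i = lift ord0 (e i).
    by apply: lift_factor => i; apply/eqP => di; apply: d_lift; exists i.
  have inje : injective e by move=> i1 i2 e12; apply: injd; rewrite !de e12.
  under eq_integral do under eq_integral do rewrite (subsample_cons_lift _ _ de).
  by under eq_integral do rewrite (IH _ e H inje mH H0); exact: integral_cst_probability.
Qed.

Lemma integral_subsample_relabel n N p (d : 'I_p -> 'I_n) (f : 'I_n -> 'I_N)
    (H : smplT X p -> \bar R) :
  {in codom d &, injective f} -> measurable_fun setT H -> (forall z, 0 <= H z) ->
  \int[iid Q N]_y H (subsample (f \o d) y) = \int[iid Q n]_x H (subsample d x).
Proof.
move=> injf mH H0; set U := in_tuple (undup (codom d)).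
have injU : injective (tnth U) by apply/tuple_uniqP; exact: undup_uniq.
have [c dc] : exists c : 'I_p -> 'I_(size (undup (codom d))), forall i, d i = tnth U (c i).
  apply: (@fin_all_exists _ _ (fun i k => d i = tnth U k)) => i.
  by apply/tnthP; rewrite mem_undup codom_f.
have law M (e : 'I_(size (undup (codom d))) -> 'I_M) : injective e ->
    \int[iid Q M]_y H (subsample (e \o c) y) = \int[iid Q _]_z H (subsample c z).
  move=> inje; under eq_integral do rewrite subsample_comp.
  by apply: integral_subsample => //; exact: measurableT_comp mH (measurable_subsample c).
transitivity (\int[iid Q _]_z H (subsample c z)); last first.
  rewrite -(law _ _ injU); congr integral; apply/funext => x.
  by congr (H (subsample _ x)); apply/funext => i /=; rewrite dc.
rewrite -(law _ (f \o tnth U)); last first.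
  move=> k1 k2 /= fk; apply: injU; apply: injf fk; by rewrite -mem_undup mem_tnth.
congr integral; apply/funext => y.
by congr (H (subsample _ y)); apply/funext => i /=; rewrite dc.
Qed.

End SubsampleLaw.

Section MeasurableFibers.
Context {d : measure_display} (T : measurableType d).

Definition measurable_fibers (C : Type) (f : T -> C) :=
  forall c, measurable (f @^-1` [set c]).

Lemma measurable_fibers_cst (C : Type) (c0 : C) : measurable_fibers (fun _ : T => c0).
Proof.
move=> c; have [<-|c0c] := pselect (c0 = c).
  by rewrite (_ : _ @^-1` _ = setT); [exact: measurableT | apply/seteqP; split].
by rewrite (_ : _ @^-1` _ = set0); [exact: measurable0 | apply/seteqP; split].
Qed.

Lemma measurable_fibers_pair (C1 C2 : Type) (a : T -> C1) (b : T -> C2) :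
  measurable_fibers a -> measurable_fibers b -> measurable_fibers (fun x => (a x, b x)).
Proof.
move=> ma mb [p q]; rewrite (_ : _ @^-1` _ = a @^-1` [set p] `&` b @^-1` [set q]).
  exact: measurableI.
by apply/seteqP; split=> x /= => [[-> ->]|[-> ->]].
Qed.

Lemma measurable_fibers_map (C1 : countType) (C : Type) (a : T -> C1) (phi : C1 -> C) :
  measurable_fibers a -> measurable_fibers (phi \o a).
Proof.
move=> ma c; rewrite (_ : _ @^-1` _ =
    \bigcup_k (if pselect (phi k = c) then a @^-1` [set k] else set0)).
  apply: countable_bigcupT_measurable; first exact: countableP.
  by move=> k; case: pselect => _ /=; [exact: ma | exact: measurable0].
apply/seteqP; split=> x /=.
  by move=> ac; exists (a x) => //; case: pselect.
by move=> [k _]; case: pselect => //= phikc ->.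
Qed.

Lemma measurable_fun_fibers d' (T' : measurableType d') (C : countType)
    (c : T -> C) (g : C -> T -> T') :
  measurable_fibers c -> (forall j, measurable_fun setT (g j)) ->
  measurable_fun setT (fun x => g (c x) x).
Proof.
move=> mc mg _ A mA; rewrite setTI.
rewrite (_ : _ @^-1` _ = \bigcup_j (c @^-1` [set j] `&` g j @^-1` A)).
  apply: countable_bigcupT_measurable; first exact: countableP.
  by move=> j; apply: measurableI; [exact: mc | rewrite -[_ @^-1` _]setTI; exact: mg].
by apply/seteqP; split=> x /= => [gx|[j _ [/= -> //]]]; exists (c x).
Qed.

End MeasurableFibers.

Lemma measurable_fibers_comp d (T : measurableType d) d' (T' : measurableType d')
    (C : Type) (f : T' -> C) (g : T -> T') :
  measurable_fun setT g -> measurable_fibers f -> measurable_fibers (f \o g).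
Proof. by move=> mg mf c; rewrite -[_ @^-1` _]setTI; exact: mg measurableT _ (mf c). Qed.

Section Reads.
Context {dX : measure_display} (X : measurableType dX).
Variables (n : nat) (idx : forall k, smplT X k -> 'I_n).

Fixpoint read_indices (k : nat) : smplT X k -> k.-tuple 'I_n :=
  match k return smplT X k -> k.-tuple 'I_n with
  | 0 => fun _ => [tuple]
  | k'.+1 => fun v => [tuple of idx v.2 :: read_indices v.2]
  end.

Lemma tnth_read_indices0 k (v : smplT X k.+1) : tnth (read_indices v) ord0 = idx v.2.
Proof. by rewrite (tnth_nth (idx v.2)). Qed.

Lemma tnth_read_indicesS k (v : smplT X k.+1) i :
  tnth (read_indices v) (lift ord0 i) = tnth (read_indices v.2) i.
Proof. by rewrite (tnth_nth (idx v.2)) /= (tnth_nth (idx v.2)). Qed.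

Definition reads_from (x : smplT X n) k (v : smplT X k) :=
  forall i, obs v i = obs x (tnth (read_indices v) i).

Lemma reads_from_reads x k : reads_from x (reads idx x k).
Proof.
elim: k => [[]//|k IH] i; case: (unliftP ord0 i) => [j ->|->].
- by rewrite obsS tnth_read_indicesS IH.
- by rewrite obs0 tnth_read_indices0.
Qed.

Lemma reads_from_eq x k (v : smplT X k) : reads_from x v -> v = reads idx x k.
Proof.
elim: k v => [[]//|k IH] [a v] xv.
have ev : v = reads idx x k.
  by apply: IH => i; have := xv (lift ord0 i); rewrite obsS tnth_read_indicesS.
by have := xv ord0; rewrite obs0 tnth_read_indices0 /= => ->; rewrite ev.
Qed.

Lemma measurable_fibers_read_indices K :
  (forall k, (k < K)%N -> measurable_fibers (@idx k)) ->
  measurable_fibers (@read_indices K).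
Proof.
elim: K => [_|K IH midx]; first exact: measurable_fibers_cst.
pose cons_tuple (p : 'I_n * K.-tuple 'I_n) := [tuple of p.1 :: p.2].
change (measurable_fibers
  (cons_tuple \o (fun v : smplT X K.+1 => (idx v.2, read_indices v.2)))).
apply: measurable_fibers_map.
apply: measurable_fibers_pair; apply: measurable_fibers_comp measurable_snd _.
  exact: midx.
by apply: IH => k kK; apply: midx; exact: ltnW.
Qed.

Lemma measurable_reads K :
  (forall k, (k < K)%N -> measurable_fibers (@idx k)) ->
  measurable_fun setT (fun x => reads idx x K).
Proof.
elim: K => [_|K IH midx] /=; first exact: measurable_cst.
have mK : measurable_fun setT (fun x => reads idx x K).
  by apply: IH => k kK; apply: midx; exact: ltnW.
apply: measurable_fun_pair => //.
apply: (measurable_fun_fibers (c := fun x => idx (reads idx x K)) (g := fun j x => obs x j)).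
  exact: measurable_fibers_comp mK (midx K _).
by move=> j; exact: measurable_obs.
Qed.

End Reads.

Section Patterns.
Context {R : realType} {dX : measure_display} (X : measurableType dX).
Variables (n m : nat) (idx : forall k, smplT X k -> 'I_n).
Local Open Scope ereal_scope.

Definition on_pattern (L : m.-tuple 'I_n) (F : smplT X m -> \bar R) v :=
  if read_indices idx v == L then F v else 0.

Lemma measurable_on_pattern L F :
  (forall k, (k < m)%N -> measurable_fibers (@idx k)) -> measurable_fun setT F ->
  measurable_fun setT (on_pattern L F).
Proof.
move=> midx mF.
apply: (measurable_fun_fibers (c := fun v => read_indices idx v == L)
  (g := fun b v => if b then F v else 0)); last by case=> //; exact: measurable_cst.
exact: (measurable_fibers_map (pred1 L) (measurable_fibers_read_indices midx)).
Qed.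

Lemma on_pattern_ge0 L F : (forall v, 0 <= F v) -> forall v, 0 <= on_pattern L F v.
Proof. by move=> F0 v; rewrite /on_pattern; case: ifP. Qed.

Lemma reads_by_pattern N (idx' : forall k, smplT X k -> 'I_N)
    (Phi : m.-tuple 'I_n -> m.-tuple 'I_N) F (y : smplT X N) :
  (forall v : smplT X m, read_indices idx' v = Phi (read_indices idx v)) ->
  F (reads idx' y m) = \sum_(L : m.-tuple 'I_n) on_pattern L F (subsample (tnth (Phi L)) y).
Proof.
move=> idxPhi; set L0 := read_indices idx (reads idx' y m).
have sub_reads L : read_indices idx (subsample (tnth (Phi L)) y) = L ->
    subsample (tnth (Phi L)) y = reads idx' y m.
  by move=> idxL; apply: reads_from_eq => i; rewrite obs_subsample idxPhi idxL.
have sub_reads0 : subsample (tnth (Phi L0)) y = reads idx' y m.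
  by apply: eq_from_obs => i; rewrite obs_subsample -idxPhi -reads_from_reads.
rewrite (bigD1 L0) //= {1}/on_pattern sub_reads0 eqxx big1 ?adde0 // => L L_L0.
rewrite /on_pattern; case: eqP => // /[dup] /sub_reads -> idxL.
by rewrite -idxL eqxx in L_L0.
Qed.

End Patterns.

Lemma index_rev_cons (T : eqType) (b a : T) (s : seq T) : a \in b :: s ->
  index a (rev (b :: s)) = index a (rev s).
Proof.
rewrite in_cons rev_cons -cats1 index_cat mem_rev; case: ifP => // a_s.
by rewrite orbF => /eqP eab; rewrite eab /= eqxx addn0 memNindex // mem_rev -eab a_s.
Qed.

Section Simulation.
Context {R : realType} {dX : measure_display} (X : measurableType dX).
Variable Q : probability X R.
Variables (n m' : nat) (idx : forall k, smplT X k -> 'I_n).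
Local Notation m := m'.+1.
Local Open Scope ereal_scope.

Definition first_read (s : seq 'I_n) (a : 'I_n) : 'I_m := inord (index a (rev s)).

(* On a fresh sample of size m the simulation stores the observations in the
   order in which they are first read: a repeated index is looked up at the time
   it was first read, and a new index read at time k goes to position k (for a
   new index, [index] returns the size k of the history). *)
Definition sim_idx k (w : smplT X k) : 'I_m := first_read (read_indices idx w) (idx w).

Lemma read_indices_sim k (v : smplT X k) :
  read_indices sim_idx v = map (first_read (read_indices idx v)) (read_indices idx v) :> seq _.
Proof.
elim: k v => [[]//|k IH] [a v] /=; rewrite IH /sim_idx /first_read.
congr cons; first by rewrite index_rev_cons // mem_head.
by apply/eq_in_map => b bv; rewrite index_rev_cons // in_cons bv orbT.
Qed.

Lemma first_read_inj (L : m.-tuple 'I_n) : {in L &, injective (first_read L)}.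
Proof.
have index_lt a : a \in L -> (index a (rev L) < m)%N.
  by rewrite -mem_rev -index_mem size_rev size_tuple.
move=> a b aL bL /(congr1 val); rewrite /= !inordK ?index_lt // => eab.
by rewrite -(nth_index a (_ : a \in rev L)) ?mem_rev // eab nth_index ?mem_rev.
Qed.

Lemma measurable_fibers_sim_idx k :
  (forall l, (l <= k)%N -> measurable_fibers (@idx l)) -> measurable_fibers (@sim_idx k).
Proof.
move=> midx; change (measurable_fibers ((fun p : k.-tuple 'I_n * 'I_n => first_read p.1 p.2)
  \o (fun w : smplT X k => (read_indices idx w, idx w)))).
apply: measurable_fibers_map; apply: measurable_fibers_pair; last exact: midx.
by apply: measurable_fibers_read_indices => l lk; apply: midx; exact: ltnW.
Qed.

Lemma integral_reads_sim (F : smplT X m -> \bar R) :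
  (forall k, (k < m)%N -> measurable_fibers (@idx k)) ->
  measurable_fun setT F -> (forall v, 0 <= F v) ->
  \int[iid Q n]_x F (reads idx x m) = \int[iid Q m]_y F (reads sim_idx y m).
Proof.
move=> midx mF F0; pose pat (L : m.-tuple 'I_n) := [tuple of map (first_read L) L].
have mpat L N (d : 'I_m -> 'I_N) :
    measurable_fun setT (fun x => on_pattern idx L F (subsample d x)).
  by apply: measurableT_comp (measurable_on_pattern _ midx mF) (measurable_subsample _).
under eq_integral do rewrite (reads_by_pattern (idx := idx) (Phi := id)) //.
have read_indices_pat v : read_indices sim_idx v = pat (read_indices idx v).
  by apply: val_inj; exact: read_indices_sim.
under [RHS]eq_integral do rewrite (reads_by_pattern _ _ read_indices_pat).
rewrite !ge0_integral_sum //; try by move=> *; exact: on_pattern_ge0.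
apply: eq_bigr => L _.
have -> : tnth (pat L) = first_read L \o tnth L by apply/funext => i; rewrite tnth_map.
apply/esym; apply: integral_subsample_relabel; last exact: on_pattern_ge0.
  by rewrite codomE map_tnth_enum; exact: first_read_inj.
exact: measurable_on_pattern.
Qed.

End Simulation.

Section Risk.
Context {R : realType} {dX : measure_display} (X : measurableType dX).
Context {Theta : Type} (P : Theta -> probability X R).
Context {dY : measure_display} {Y : measurableType dY} (L : Y -> Theta -> \bar R).
Hypothesis L_ge0 : forall y theta, (0 <= L y theta)%E.
Hypothesis L_meas : forall theta, measurable_fun setT (fun y => L y theta).
Local Open Scope ereal_scope.

Lemma minimax_le_riskn n (g : smplT X n -> Y) :
  measurable_fun setT g -> minimax P L n <= riskn P L g.
Proof. by move=> mg; apply: ereal_inf_lbound; exists g. Qed.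

Lemma eq_riskn n n' (f : smplT X n -> Y) (g : smplT X n' -> Y) :
  (forall theta, risk P L f theta = risk P L g theta) -> riskn P L f = riskn P L g.
Proof.
move=> fg; rewrite /riskn; congr ereal_sup.
by apply/seteqP; split=> _ [t _ <-]; exists t; rewrite ?fg.
Qed.

Lemma riskn_subsample n r (d : 'I_r -> 'I_n) (g : smplT X r -> Y) :
  injective d -> measurable_fun setT g -> riskn P L (g \o subsample d) = riskn P L g.
Proof.
move=> injd mg; apply: eq_riskn => t; rewrite /risk /=.
by apply: integral_subsample => //; exact: measurableT_comp (L_meas t) mg.
Qed.

Lemma widen_ord_inj n n' (le_nn' : (n <= n')%N) : injective (widen_ord le_nn').
Proof. by move=> i j /(congr1 val) /= /ord_inj. Qed.

Lemma minimax_nonincreasing : {homo minimax P L : k k' / (k <= k')%N >-> k' <= k}.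
Proof.
move=> k k' kk'; apply: le_ereal_inf_tmp => _ [g mg <-].
rewrite -(riskn_subsample (@widen_ord_inj _ _ kk') mg); apply: minimax_le_riskn.
exact: measurableT_comp mg (measurable_subsample _).
Qed.

Lemma minimax_le_riskn_reading n m (f : smplT X n -> Y) :
  computed_reading m f -> minimax P L m <= riskn P L f.
Proof.
case=> idx [out [midx mout /funext ->]].
case: m idx out midx mout => [|m] idx out midx mout.
  have -> : (fun x => out (reads idx x 0)) = out \o subsample (widen_ord (leq0n n)) by [].
  by rewrite riskn_subsample //; [exact: minimax_le_riskn | exact: widen_ord_inj].
have mfidx k : (k < m.+1)%N -> measurable_fibers (@idx k) by move=> km j; exact: midx.
rewrite (@eq_riskn _ _ _ (fun y => out (reads (sim_idx m idx) y m.+1))).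
  apply: minimax_le_riskn; apply: measurableT_comp mout (measurable_reads _).
  move=> k km; apply: measurable_fibers_sim_idx => l lk.
  by apply: mfidx; exact: leq_ltn_trans lk km.
move=> t; apply: (@integral_reads_sim _ _ _ _ _ _ _ (fun v => L (out v) t)) => //.
exact: measurableT_comp (L_meas t) mout.
Qed.

End Risk.

Lemma limf_esup_lt_near {R : realType} (T : choiceType) (X : filteredType T)
    (F : set_system X) {FF : Filter F} (f : X -> \bar R) (x : \bar R) :
  (limf_esup f F < x)%E -> \forall y \near F, (f y < x)%E.
Proof.
move=> /ereal_inf_lt[_ [V FV <-]] supVx; apply: filterS FV => y Vy.
by apply: le_lt_trans supVx; apply: ereal_sup_ubound; exists y.
Qed.

Lemma sublinear_near {R : realType} (b : nat -> nat) (a : nat) :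
  (fun n => (b n)%:R / n%:R : R) @ \oo --> (0 : R) -> \forall n \near \oo, (a * b n < n)%N.
Proof.
move=> b_sub; have inv_gt0 : (0 : R) < a.+1%:R^-1 by rewrite invr_gt0.
have [N _ bN] := cvgr_lt _ b_sub _ inv_gt0.
exists N.+1 => // n /= Nn; have n_gt0 : (0 < n)%N by apply: leq_ltn_trans Nn.
have := bN n (ltnW Nn); rewrite ltr_pdivrMr ?ltr0n // mulrC ltr_pdivlMr ?ltr0n //.
rewrite -natrM ltr_nat => /(leq_ltn_trans _); apply.
by rewrite mulnC leq_mul2l leqnSn orbT.
Qed.

Lemma limn_esup_ratio_small {R : realType} (r : nat -> \bar R) (eps : R) :
  limn_esup (fun a => limn_esup (fun n => (fine (r (a * n)%N) / fine (r n))%:E)) = 0%E ->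
  0 < eps -> exists2 a, (0 < a)%N & \forall n \near \oo, fine (r (a * n)%N) / fine (r n) < eps.
Proof.
move=> r_ratio eps_gt0.
have [N _ hN] : \forall a \near \oo,
    (limn_esup (fun n => (fine (r (a * n)%N) / fine (r n))%:E) < eps%:E)%E.
  by apply: limf_esup_lt_near; move: r_ratio; rewrite /limn_esup => ->; rewrite lte_fin.
exists N.+1 => //; apply: filterS (limf_esup_lt_near (hN N.+1 (leqnSn N))) => n.
by rewrite lte_fin.
Qed.

Lemma ratio_cvgey {R : realType} (r s : nat -> \bar R) (b : nat -> nat) :
  {homo r : k k' / (k <= k')%N >-> (k' <= k)%E} ->
  (\forall n \near \oo, (0 < r n)%E /\ (r n < +oo)%E) ->
  limn_esup (fun a => limn_esup (fun n => (fine (r (a * n)%N) / fine (r n))%:E)) = 0%E ->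
  (fun n => (b n)%:R / n%:R : R) @ \oo --> (0 : R) ->
  (\forall n \near \oo, (r (b n) <= s n)%E) ->
  (fun n => (s n * ((fine (r n))^-1)%:E)%E) @ \oo --> +oo%E.
Proof.
move=> r_noninc [N0 _ r_fin] r_ratio b_sub [Ns _ s_ge]; apply/cvgeyPge => A.
set A' := Num.max A 1; have A'_gt0 : 0 < A' by rewrite lt_max ltr01 orbT.
have invA'_gt0 : 0 < A'^-1 by rewrite invr_gt0.
have [a a_gt0 [Nr _ ratio_a]] := limn_esup_ratio_small r_ratio invA'_gt0.
have [Nb _ ab_lt] := sublinear_near a b_sub.
have r_finE k : (N0 <= k)%N -> r k = (fine (r k))%:E /\ 0 < fine (r k).
  move=> /r_fin[r_gt0 r_lty]; have r_fin_num : r k \is a fin_num.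
    by rewrite ge0_fin_numE // ltW.
  by rewrite fineK //; split; rewrite // -lte_fin fineK.
pose N := maxn N0 Nr; exists (maxn (maxn Ns Nb) (a * N)) => // n /=.
rewrite !geq_max => /andP[/andP[nNs nNb] naN]; set m := maxn (b n) N.
have Nm : (N <= m)%N by rewrite leq_maxr.
have aNm : (N <= a * m)%N by apply: leq_trans Nm _; rewrite leq_pmull.
have nN : (N <= n)%N by apply: leq_trans naN; rewrite leq_pmull.
have [rmE rm_gt0] := r_finE m (leq_trans (leq_maxl _ _) Nm).
have [rnE rn_gt0] := r_finE n (leq_trans (leq_maxl _ _) nN).
have [ramE _] := r_finE (a * m)%N (leq_trans (leq_maxl _ _) aNm).
(* R(n) <= R(a m) < R(m) / A' <= s n / A' *)
have ram_lt : A' * fine (r (a * m)%N) < fine (r m).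
  by rewrite -ltr_pdivlMl // -ltr_pdivrMr // ratio_a //= (leq_trans (leq_maxr _ _) Nm).
have rn_le : fine (r n) <= fine (r (a * m)%N).
  rewrite -lee_fin -rnE -ramE r_noninc // /m maxnMr geq_max naN andbT.
  exact: ltnW (ab_lt _ nNb).
have A'_lt : A' < fine (r m) / fine (r n).
  by rewrite ltr_pdivlMr // (le_lt_trans (ler_wpM2l (ltW A'_gt0) rn_le) ram_lt).
apply: (@le_trans _ _ A'%:E); first by rewrite lee_fin le_max lexx.
apply: (@le_trans _ _ ((fine (r m))%:E * ((fine (r n))^-1)%:E)%E).
  by rewrite -EFinM lee_fin ltW.
apply: lee_wpmul2r; first by rewrite lee_fin invr_ge0 ltW.
by rewrite -rmE (le_trans (r_noninc _ _ (leq_maxl _ _)) (s_ge _ nNs)).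
Qed.

Theorem theorem4 (R : realType) (dX : measure_display) (X : measurableType dX)
  (Theta : Type) (P : Theta -> probability X R)
  (dY : measure_display) (Y : measurableType dY) (L : Y -> Theta -> \bar R)
  (L_ge0 : forall y theta, (0 <= L y theta)%E)
  (L_meas : forall theta, measurable_fun setT (fun y => L y theta))
  (R_fin : \forall n \near \oo,
      (0 < minimax P L n)%E /\ (minimax P L n < +oo)%E)
  (R_ratio : limn_esup (fun a : nat =>
      limn_esup (fun n : nat =>
        ((fine (minimax P L (a * n)%N) / fine (minimax P L n))%:E))) = 0%E)
  (phi : forall n : nat, smplT X n -> Y)
  (phi_meas : forall n, measurable_fun setT (phi n))
  (phi_fast : exists b : nat -> nat,
      ((fun n => (b n)%:R / n%:R : R) @ \oo --> (0 : R)) /\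
      \forall n \near \oo, exists m : nat, (m <= b n)%N /\ computed_reading m (phi n)) :
  (fun n : nat => (riskn P L (phi n) * ((fine (minimax P L n))^-1)%:E)%E)
    @ \oo --> +oo%E.
Proof.
case: phi_fast => b [b_sub phi_reads].
apply: (ratio_cvgey (minimax_nonincreasing P L_ge0 L_meas) R_fin R_ratio b_sub).
apply: filterS phi_reads => n [m [m_le phi_m]].
apply: le_trans (minimax_le_riskn_reading P L_ge0 L_meas phi_m).
exact: minimax_nonincreasing.
Qed.
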